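(* Let $X$ be an $n$-dimensional polyhedral normed space and let $Y \subseteq X$ be a subspace of dimension $k$, where $1 \leq k \leq n-1$. Suppose that some $P_0 \in \mathcal{P}_{\min}(X, Y)$ has at most $m$ norming pairs. Then $\dim \mathcal{P}_{\min}(X, Y) \geq k(n-k)-m+1$.
   Context: A normed space $X=(\mathbb{R}^n,\|\cdot\|)$ is polyhedral if its unit ball is a convex polytope. A projection onto $Y$ is a linear $P:X\to Y$ with $P|_Y=\mathrm{id}_Y$; $\lambda(Y,X)$ is the infimum of the operator norms of projections and $\mathcal{P}_{\min}(X,Y)$ the set of projections of norm $\lambda(Y,X)$; $\dim\mathcal{P}_{\min}(X,Y)$ is the affine dimension of this convex subset of $\mathcal{L}(X,X)$. A norming pair for a projection $P$ is a pair $(x,f)\in \mathrm{ext}\,B_X\times \mathrm{ext}\,B_{X^*}$ (extreme points of the unit balls of $X$ and $X^*$) with $f(P(x))=\|P\|$. *)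

From HB Require Import structures.
From mathcomp Require Import all_boot all_order all_algebra.
From mathcomp Require Import boolp classical_sets reals.
Set Implicit Arguments. Unset Strict Implicit. Unset Printing Implicit Defensive.
Import Order.TTheory GRing.Theory Num.Theory.
Local Open Scope ring_scope.
Local Open Scope classical_set_scope.

Section PolyNorm.
Variables (R : realType) (n : nat).
Local Notation vec := 'rV[R]_n.
Local Notation op := 'M[R]_n.

(* Convention: vectors of X = R^n are row vectors, an operator P : L(X,X)
   is a matrix acting by x |-> x *m P, and a functional f in X^* is a row
   vector acting by x |-> dot f x. *)
Definition dot (f x : vec) : R := \sum_(i < n) f 0 i * x 0 i.

Definition is_norm (N : vec -> R) : Prop :=
  [/\ forall x, N x = 0 -> x = 0,
      forall (a : R) x, N (a *: x) = `|a| * N x &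
      forall x y, N (x + y) <= N x + N y].

Definition in_conv_hull (V : seq vec) (x : vec) : Prop :=
  exists l : 'I_(size V) -> R,
    [/\ forall i, 0 <= l i, \sum_i l i = 1 &
        x = \sum_i l i *: V`_i].

Definition unit_ball (N : vec -> R) : set vec := [set x | N x <= 1].

Definition polyhedral (N : vec -> R) : Prop :=
  exists V : seq vec, forall x, unit_ball N x <-> in_conv_hull V x.

Definition dual_unit_ball (N : vec -> R) : set vec :=
  [set f | forall x, N x <= 1 -> dot f x <= 1].

Definition extreme_point (C : set vec) (x : vec) : Prop :=
  C x /\ forall y z (t : R), C y -> C z -> 0 < t < 1 ->
    x = t *: y + (1 - t) *: z -> y = z.

Definition opnorm (N : vec -> R) (P : op) : R :=
  sup [set N (x *m P) | x in unit_ball N].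

(* projections onto the subspace Y (= row space of the matrix Y) *)
Definition is_projection (Y : op) (P : op) : Prop :=
  (P <= Y)%MS /\ forall x : vec, (x <= Y)%MS -> x *m P = x.

Definition rel_proj_const (N : vec -> R) (Y : op) : R :=
  inf [set opnorm N P | P in is_projection Y].

Definition Pmin (N : vec -> R) (Y : op) : set op :=
  [set P | is_projection Y P /\ opnorm N P = rel_proj_const N Y].

Definition norming_pair (N : vec -> R) (P : op) (xf : vec * vec) : Prop :=
  [/\ extreme_point (unit_ball N) xf.1,
      extreme_point (dual_unit_ball N) xf.2 &
      dot xf.2 (xf.1 *m P) = opnorm N P].

Definition aff_indep_in (S : set op) (d : nat) : Prop :=
  exists P : 'I_d.+1 -> op,
    (forall i, S (P i)) /\ free [seq P (lift ord0 i) - P ord0 | i : 'I_d].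

(* affine dimension of S (the dimension of its affine hull);
   any affinely independent family in L(X,X) has at most n*n+1 points *)
Definition affdim (S : set op) : nat :=
  \max_(d < (n * n).+1 | `[< aff_indep_in S d >]) d.

End PolyNorm.

(* The unit ball is the convex hull of a finite set [V] of its extreme points
   and, by Farkas' lemma, every vector is normed by one of the finitely many
   extreme points [Ef] of the dual ball, so that [opnorm N Q] is the maximum
   of [dot f (x *m Q)] over [V] x [Ef].  The projections onto [Y] form the
   affine space [P0 + W] with [dim W = k (n - k)].  Near [P0] only the pairs
   attaining [opnorm N P0] matter; they are norming pairs, hence at most [m].
   Since [P0] is minimal, no direction of [W] decreases all of them, so the
   linear map sending [D] to the values [dot f (x *m D)] on these pairs is not
   onto, and its kernel in [W] has dimension at least [k (n - k) - m + 1].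
   Along each direction of this kernel [P0 + t D] stays in [Pmin] for small
   [t > 0]. *)

From Pilot Require Import Defs.
From HB Require Import structures.
From mathcomp Require Import all_boot all_order all_algebra.
From mathcomp Require Import boolp classical_sets reals.
From mathcomp Require Import ring lra zify.
Set Implicit Arguments. Unset Strict Implicit. Unset Printing Implicit Defensive.
Import Order.TTheory GRing.Theory Num.Theory.
Local Open Scope ring_scope.

Lemma exists_between (R : realDomainType) (Ls Us : seq R) :
  (forall l u, l \in Ls -> u \in Us -> l <= u) ->
  exists t, (forall l, l \in Ls -> l <= t) /\ (forall u, u \in Us -> t <= u).
Proof.
move=> LU; pose t0 := \big[Num.min/0]_(u <- Us | u \in Us) u.
exists (\big[Num.max/t0]_(l <- Ls | l \in Ls) l).
split=> [l lL|u uU]; first exact: le_bigmax_seq.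
by apply: bigmax_le => [|l lL]; [exact: ge_bigmin_seq | exact: LU].
Qed.

Lemma exists_pos_lb (R : realDomainType) (I : eqType) (r : seq I) (g : I -> R) :
  (forall i, i \in r -> 0 < g i) -> exists2 e, 0 < e & forall i, i \in r -> e <= g i.
Proof.
move=> g0; exists (\big[Num.min/1]_(i <- r | i \in r) g i); first exact: lt_bigmin.
by move=> i ir; apply: ge_bigmin_seq.
Qed.

Section Dot.
Variables (R : realType) (n : nat).
Local Notation vec := 'rV[R]_n.
Local Notation dot := (@dot R n).

Lemma dotC (f x : vec) : dot f x = dot x f.
Proof. by apply: eq_bigr => i _; rewrite mulrC. Qed.

Lemma dotDr (f x y : vec) : dot f (x + y) = dot f x + dot f y.
Proof. by rewrite /Defs.dot -big_split; apply: eq_bigr => i _; rewrite !mxE mulrDr. Qed.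

Lemma dotZr (f x : vec) a : dot f (a *: x) = a * dot f x.
Proof. by rewrite /Defs.dot mulr_sumr; apply: eq_bigr => i _; rewrite !mxE mulrCA. Qed.

Lemma dotDl (f g x : vec) : dot (f + g) x = dot f x + dot g x.
Proof. by rewrite dotC dotDr !(dotC x). Qed.

Lemma dotZl (f x : vec) a : dot (a *: f) x = a * dot f x.
Proof. by rewrite dotC dotZr dotC. Qed.

Lemma dot0r (f : vec) : dot f 0 = 0.
Proof. by rewrite -(scale0r 0) dotZr mul0r. Qed.

Lemma dotNl (f x : vec) : dot (- f) x = - dot f x.
Proof. by rewrite -scaleN1r dotZl mulN1r. Qed.

Lemma dotBl (f g x : vec) : dot (f - g) x = dot f x - dot g x.
Proof. by rewrite dotDl dotNl. Qed.

Lemma dot_sumr m (c : 'I_m -> R) (u : 'I_m -> vec) f :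
  dot f (\sum_i c i *: u i) = \sum_i c i * dot f (u i).
Proof.
elim/big_rec2: _ => [|i y1 y2 _ <-]; first exact: dot0r.
by rewrite dotDr dotZr.
Qed.

Lemma dot_unit_row f (o : 'I_n) : dot f (\row_i (i == o)%:R) = f 0 o.
Proof.
rewrite /Defs.dot (bigD1 o) //= big1 ?mxE ?eqxx ?mulr1 ?addr0 // => i io.
by rewrite mxE (negbTE io) mulr0.
Qed.

Lemma dot_self_gt0 (d : vec) : d != 0 -> 0 < dot d d.
Proof.
move=> dn0; have [i di] : exists i, d 0 i != 0.
  apply/existsP; apply: contraR dn0; rewrite negb_exists => /forallP d0.
  by apply/eqP/rowP => i; rewrite mxE; apply/eqP/negPn/d0.
rewrite /Defs.dot (bigD1 i) //= ltr_pwDl ?sumr_ge0 // => [|j _].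
  by rewrite -expr2 lt_def sqr_ge0 andbT sqrf_eq0.
by rewrite -expr2 sqr_ge0.
Qed.

End Dot.

Section FourierMotzkin.
Variables (R : realType) (n : nat).
Local Notation vec := 'rV[R]_n.
Local Notation dot := (@dot R n).
Local Notation ineq := (vec * R)%type.

(* A pair [(a, b)] stands for the linear inequality [dot a x <= b] in the
   unknown [x]; [cone s a b] says that [(a, b)] is a nonnegative combination
   of the inequalities of [s]. *)
Definition feasible (s : seq ineq) :=
  exists x, forall c, c \in s -> dot c.1 x <= c.2.

Inductive cone (s : seq ineq) : vec -> R -> Prop :=
| cone0 : cone s 0 0
| coneD a b a' b' : cone s a b -> cone s a' b' -> cone s (a + a') (b + b')
| coneZ c a b : 0 <= c -> cone s a b -> cone s (c *: a) (c * b)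
| cone_mem a b : (a, b) \in s -> cone s a b.

Lemma cone_sub s s' a b :
  (forall c, c \in s' -> cone s c.1 c.2) -> cone s' a b -> cone s a b.
Proof.
move=> s's; elim=> [|? ? ? ? _ ? _ ?|? ? ? ? _ ?|? ? /s's //].
- exact: cone0.
- exact: coneD.
- exact: coneZ.
Qed.

Section Elimination.
Variable o : 'I_n.

(* Fourier-Motzkin elimination of the unknown [x 0 o]: keep the inequalities
   not involving it and add, for each upper bound [p] and lower bound [q] on
   it, the positive combination [fm_comb p q] in which it cancels. *)
Definition fm_comb (p q : ineq) : ineq :=
  ((- q.1 0 o) *: p.1 + p.1 0 o *: q.1, (- q.1 0 o) * p.2 + p.1 0 o * q.2).

Definition eliminate (s : seq ineq) : seq ineq :=
  [seq c : ineq <- s | c.1 0 o == 0] ++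
  [seq fm_comb p q | p <- [seq c : ineq <- s | 0 < c.1 0 o],
                     q <- [seq c : ineq <- s | c.1 0 o < 0]].

Variable s : seq ineq.

Lemma mem_eliminate (c : ineq) : c \in eliminate s ->
  (c \in s /\ c.1 0 o = 0) \/
  exists p q, [/\ p \in s, 0 < p.1 0 o, q \in s, q.1 0 o < 0 & c = fm_comb p q].
Proof.
rewrite mem_cat mem_filter => /orP[/andP[/eqP c0 cs]|/allpairsP[[p q] /= []]].
  by left.
by rewrite !mem_filter => /andP[p0 ps] /andP[q0 qs] ->; right; exists p, q.
Qed.

Lemma eliminate_cone (c : ineq) : c \in eliminate s -> cone s c.1 c.2.
Proof.
case/mem_eliminate => [[cs _]|[p [q [ps p0 qs q0 ->]]]].
  by apply: cone_mem; case: c cs.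
apply: coneD; apply: coneZ; rewrite ?oppr_ge0 ?ltW //; apply: cone_mem.
  by case: p ps {p0}.
by case: q qs {q0}.
Qed.

Lemma eliminate_coord0 (i : 'I_n) (c : ineq) : c \in eliminate s ->
  (i = o \/ forall c', c' \in s -> c'.1 0 i = 0) -> c.1 0 i = 0.
Proof.
case/mem_eliminate => [[cs c0]|[p [q [ps _ qs _ ->]]]] [->|s0] //=; first exact: s0.
  by rewrite !mxE mulNr mulrC addNr.
by rewrite !mxE (s0 _ ps) (s0 _ qs) !mulr0 addr0.
Qed.

(* A solution of the eliminated system extends along the [o]-th axis: the
   combined inequalities say exactly that every lower bound on the new
   coordinate is below every upper bound. *)
Lemma feasible_eliminate : feasible (eliminate s) -> feasible s.
Proof.
case=> x xsol; pose slack (c : ineq) := (c.2 - dot c.1 x) / c.1 0 o.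
have [t [lo_t t_up]] : exists t,
    (forall l, l \in [seq slack q | q : ineq <- s & q.1 0 o < 0] -> l <= t) /\
    (forall u, u \in [seq slack p | p : ineq <- s & 0 < p.1 0 o] -> t <= u).
  apply: exists_between => _ _ /mapP[q + ->] /mapP[p + ->].
  rewrite !mem_filter => /andP[q0 qs] /andP[p0 ps].
  have /xsol : fm_comb p q \in eliminate s.
    by rewrite mem_cat; apply/orP; right; apply/allpairsP; exists (p, q);
      rewrite !mem_filter p0 q0 ps qs.
  rewrite /= dotDl !dotZl /slack ler_ndivrMr // mulrAC ler_pdivrMr // => h.
  nra.
exists (x + t *: \row_i (i == o)%:R) => c cs.
rewrite dotDr dotZr dot_unit_row.
have [c0|c0|c0] := ltgtP (c.1 0 o) 0.
- have : slack c <= t by apply: lo_t; apply/mapP; exists c; rewrite ?mem_filter ?c0.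
  by rewrite ler_ndivrMr //; lra.
- have : t <= slack c by apply: t_up; apply/mapP; exists c; rewrite ?mem_filter ?c0.
  by rewrite ler_pdivlMr //; lra.
- by rewrite c0 mulr0 addr0 xsol // mem_cat mem_filter c0 eqxx cs.
Qed.

End Elimination.

Lemma farkas_coords (os : seq 'I_n) (s : seq ineq) :
  (forall (c : ineq) i, c \in s -> i \notin os -> c.1 0 i = 0) ->
  ~ feasible s -> exists2 b, b < 0 & cone s 0 b.
Proof.
elim: os s => [|o os IH] s s0 infeas.
  have [c cs c2] : exists2 c, c \in s & c.2 < 0.
    apply: contra_notP infeas => pos; exists 0 => c cs.
    by rewrite dot0r leNgt; apply/negP => c2; apply: pos; exists c.
  have c1 : c.1 = 0 by apply/rowP => i; rewrite mxE s0.
  by exists c.2 => //; rewrite -c1; apply: cone_mem; case: c cs {c2 c1}.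
have [b b0 cb] : exists2 b, b < 0 & cone (eliminate o s) 0 b.
  apply: IH => [c i cs ios|/feasible_eliminate //].
  apply: eliminate_coord0 cs _; have [->|io] := eqVneq i o; first by left.
  by right=> c' c's; apply: s0; rewrite // inE negb_or io.
by exists b => //; apply: cone_sub cb => c; apply: eliminate_cone.
Qed.

Lemma farkas (s : seq ineq) : ~ feasible s -> exists2 b, b < 0 & cone s 0 b.
Proof. by apply: (@farkas_coords (enum 'I_n)) => c i _; rewrite mem_enum. Qed.

End FourierMotzkin.

Section Norm.
Variables (R : realType) (n : nat) (N : 'rV[R]_n -> R).
Hypothesis hN : is_norm N.
Local Notation vec := 'rV[R]_n.
Local Notation dot := (@dot R n).

Lemma nrmZ a x : N (a *: x) = `|a| * N x.
Proof. by case: hN. Qed.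

Lemma nrm0 : N 0 = 0.
Proof. by rewrite -(scale0r (0 : vec)) nrmZ normr0 mul0r. Qed.

Lemma ler_nrmD x y : N (x + y) <= N x + N y.
Proof. by case: hN. Qed.

Lemma nrm_ge0 x : 0 <= N x.
Proof.
have := ler_nrmD x (- x).
by rewrite subrr nrm0 -scaleN1r nrmZ normrN normr1 mul1r; lra.
Qed.

Lemma nrm_gt0 x : x != 0 -> 0 < N x.
Proof.
move=> x0; rewrite lt_def nrm_ge0 andbT; apply: contra x0 => /eqP.
by case: hN => + _ _ => /[apply] ->.
Qed.

Lemma nrm_normalize x : x != 0 -> N ((N x)^-1 *: x) = 1.
Proof.
move=> /nrm_gt0 Nx; rewrite nrmZ ger0_norm ?invr_ge0 ?ltW //.
by rewrite mulVf ?gt_eqF.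
Qed.

Lemma ler_nrm_conv m (c : 'I_m -> R) (u : 'I_m -> vec) :
  (forall i, 0 <= c i) -> N (\sum_i c i *: u i) <= \sum_i c i * N (u i).
Proof.
move=> c0; elim/big_rec2: _ => [|i y1 y2 _ le_y]; first by rewrite nrm0.
by apply: le_trans (ler_nrmD _ _) _; rewrite nrmZ ger0_norm // lerD2l.
Qed.

Lemma dual_ball_le f z : dual_unit_ball N f -> dot f z <= N z.
Proof.
move=> fB; have [->|z0] := eqVneq z 0; first by rewrite dot0r nrm0.
have Nz := nrm_gt0 z0.
have := fB ((N z)^-1 *: z); rewrite nrm_normalize // lexx dotZr => /(_ isT).
by rewrite -(ler_pM2l Nz) mulrA mulfV ?gt_eqF // mul1r mulr1.
Qed.

End Norm.

Section ConvexHull.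
Variables (R : realType) (n : nat).
Local Notation vec := 'rV[R]_n.

Lemma conv_hull_mem (V : seq vec) v : v \in V -> in_conv_hull V v.
Proof.
move=> vV; pose i0 := Ordinal (etrans (index_mem v V) vV).
exists (fun i => (i == i0)%:R); split=> [i||]; first by rewrite ler0n.
  by rewrite (bigD1 i0) //= eqxx big1 ?addr0 // => i /negbTE ->.
rewrite (bigD1 i0) //= eqxx scale1r big1 ?addr0 ?nth_index // => i /negbTE ->.
by rewrite scale0r.
Qed.

Lemma conv_hull_comb (V : seq vec) m (c : 'I_m -> R) (u : 'I_m -> vec) :
  (forall i, 0 <= c i) -> \sum_i c i = 1 ->
  (forall i, 0 < c i -> in_conv_hull V (u i)) ->
  in_conv_hull V (\sum_i c i *: u i).
Proof.
move=> c0 c1 uV.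
have cz i : ~~ (0 < c i) -> c i = 0 by rewrite lt_def c0 andbT negbK => /eqP.
have /choice[mu muP] : forall i, exists mu : 'I_(size V) -> R, 0 < c i ->
    [/\ forall j, 0 <= mu j, \sum_j mu j = 1 & u i = \sum_j mu j *: V`_j].
  move=> i; have [/uV [mu ?]|ci] := boolP (0 < c i); first by exists mu.
  by exists (fun=> 0).
exists (fun j => \sum_i c i * mu i j); split=> [j||].
- apply: sumr_ge0 => i _; have [/muP[mu0 _ _]|/cz ->] := boolP (0 < c i).
    by rewrite mulr_ge0.
  by rewrite mul0r.
- rewrite exchange_big /= -c1; apply: eq_bigr => i _; rewrite -mulr_sumr.
  by have [/muP[_ -> _]|/cz ->] := boolP (0 < c i); rewrite ?mulr1 ?mul0r.
- transitivity (\sum_j \sum_i (c i * mu i j) *: V`_j).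
    rewrite exchange_big /=; apply: eq_bigr => i _.
    under eq_bigr do rewrite -scalerA.
    rewrite -scaler_sumr.
    by have [/muP[_ _ <-]|/cz ->] := boolP (0 < c i); rewrite ?scale0r.
  by apply: eq_bigr => j _; rewrite scaler_suml.
Qed.

Lemma conv_hull_filter (V : seq vec) v :
  in_conv_hull [seq x <- V | x != v] v ->
  forall x, in_conv_hull V x <-> in_conv_hull [seq x <- V | x != v] x.
Proof.
move=> vV' x; split=> [[c [c0 c1 ->]]|[c [c0 c1 ->]]]; apply: conv_hull_comb => // j _.
  have [->//|jv] := eqVneq V`_j v.
  by apply: conv_hull_mem; rewrite mem_filter jv mem_nth.
by apply: conv_hull_mem; have /(mem_nth 0) := ltn_ord j; rewrite mem_filter => /andP[].
Qed.

Lemma conv_hull_weights_at (V : seq vec) v (c : 'I_(size V) -> R) :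
  ~ in_conv_hull [seq x <- V | x != v] v ->
  (forall j, 0 <= c j) -> \sum_j c j = 1 -> v = \sum_j c j *: V`_j ->
  forall j : 'I_(size V), V`_j != v -> c j = 0.
Proof.
move=> vV' c0 c1 vc; pose at_v := [pred j : 'I_(size V) | V`_j == v].
pose C := \sum_(j | at_v j) c j; pose D := \sum_(j | ~~ at_v j) c j.
have CD : C + D = 1 by rewrite -c1 [RHS](bigID at_v).
have D0 : 0 <= D by rewrite sumr_ge0.
suff : D = 0.
  move/eqP; rewrite psumr_eq0 // => /allP c_eq0 j jv.
  by have /implyP/(_ jv)/eqP := c_eq0 j (mem_index_enum _).
(* A positive weight [D] off [v] would renormalize to a combination [l] of
   the other points equal to [v]. *)
apply: contra_notP vV' => /eqP Dn0; have Dgt0 : 0 < D by rewrite lt_def Dn0.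
have vD : D *: v = \sum_(j | ~~ at_v j) c j *: V`_j.
  apply: (addrI (C *: v)); rewrite -scalerDl CD scale1r {1}vc.
  rewrite (bigID at_v) /= scaler_suml; congr (_ + _).
  by apply: eq_bigr => j /eqP ->.
pose l j := (~~ at_v j)%:R * (c j / D).
have vl : \sum_j l j *: V`_j = v.
  rewrite -[RHS]scale1r -(mulVf (lt0r_neq0 Dgt0)) -scalerA vD scaler_sumr.
  rewrite (bigID at_v) /= [X in X + _]big1 ?add0r => [|j jv]; last first.
    by rewrite /l /= jv mul0r scale0r.
  by apply: eq_bigr => j /negbTE jv; rewrite /l /= jv mul1r scalerA mulrC.
rewrite -[X in in_conv_hull _ X]vl.
apply: conv_hull_comb => [j|| j].
- by rewrite mulr_ge0 ?divr_ge0.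
- rewrite (bigID at_v) /= big1 ?add0r => [|j jv]; last by rewrite /l /= jv mul0r.
  rewrite -(mulfV (lt0r_neq0 Dgt0)) mulr_suml; apply: eq_bigr => j /negbTE jv.
  by rewrite /l /= jv mul1r.
- rewrite /l /=; have [->|jv _] := eqVneq V`_j v; first by rewrite mul0r ltxx.
  by apply: conv_hull_mem; rewrite mem_filter jv mem_nth.
Qed.

Lemma conv_hull_extreme (V : seq vec) v : v \in V ->
  ~ in_conv_hull [seq x <- V | x != v] v -> extreme_point (in_conv_hull V) v.
Proof.
move=> vV vV'; split=> [|y w t [a [a0 a1 ->]] [b [b0 b1 ->]] /andP[t0 t1] vtab].
  exact: conv_hull_mem.
pose c j := t * a j + (1 - t) * b j.
have c0 j : 0 <= t * a j /\ 0 <= (1 - t) * b j.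
  by split; apply: mulr_ge0 => //; rewrite ?subr_ge0 ltW.
have c1 : \sum_j c j = 1 by rewrite big_split /= -!mulr_sumr a1 b1; ring.
have vc : v = \sum_j c j *: V`_j.
  rewrite vtab !scaler_sumr -big_split; apply: eq_bigr => j _.
  by rewrite !scalerA scalerDl.
have c_eq0 := conv_hull_weights_at vV' (fun j => addr_ge0 (c0 j).1 (c0 j).2) c1 vc.
have concentrated (e : 'I_(size V) -> R) : \sum_j e j = 1 ->
    (forall j : 'I_(size V), V`_j != v -> e j = 0) -> \sum_j e j *: V`_j = v.
  move=> e1 e0; rewrite -[RHS]scale1r -e1 scaler_suml; apply: eq_bigr => j _.
  by have [->|/e0 ->] := eqVneq V`_j v; rewrite ?scale0r.
have ab0 (j : 'I_(size V)) : V`_j != v -> a j = 0 /\ b j = 0.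
  move/c_eq0; have [ta tb] := c0 j => cj.
  have /eqP : t * a j = 0 by lra.
  have /eqP : (1 - t) * b j = 0 by lra.
  by rewrite !mulf_eq0 subr_eq0 eq_sym (lt_eqF t1) (gt_eqF t0) /= => /eqP-> /eqP->.
by rewrite !concentrated // => j /ab0[].
Qed.

End ConvexHull.

Section Ball.
Variables (R : realType) (n : nat) (N : 'rV[R]_n -> R).
Hypothesis hN : is_norm N.
Local Notation vec := 'rV[R]_n.
Local Notation dot := (@dot R n).

Definition ball_hull (V : seq vec) := forall x, N x <= 1 <-> in_conv_hull V x.

(* A description of the ball as a hull of the smallest possible number of
   points uses extreme points only. *)
Lemma ball_hull_extreme : polyhedral N ->
  exists2 V, ball_hull V & forall v, v \in V -> extreme_point (unit_ball N) v.
Proof.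
case=> V0 hV0; pose size_ok k := `[< exists V, size V = k /\ ball_hull V >].
have [|_ /asboolP[V [<- hV]] Vmin] := @ex_minnP size_ok.
  by exists (size V0); apply/asboolP; exists V0.
exists V => // v vV; have -> : unit_ball N = in_conv_hull V.
  by apply/funext => x; apply/propext/hV.
apply: conv_hull_extreme => // vV'.
have shorter : (size [seq x <- V | x != v] < size V)%N.
  rewrite size_filter -[X in (_ < X)%N](count_predC (pred1 v)) -addn1 addnC.
  by rewrite leq_add2r -has_count; apply/hasP; exists v; rewrite /= ?eqxx.
have /Vmin : size_ok (size [seq x <- V | x != v]).
  apply/asboolP; exists [seq x <- V | x != v]; split=> // x.
  by rewrite hV; apply: conv_hull_filter.
by rewrite leqNgt shorter.
Qed.

Section Dual.
Variable V : seq vec.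
Hypothesis hV : ball_hull V.

Lemma dual_ballP f : dual_unit_ball N f <-> forall i : 'I_(size V), dot f V`_i <= 1.
Proof.
split=> [fB i|fV x /hV[c [c0 c1 ->]]]; first by apply/fB/hV/conv_hull_mem/mem_nth.
by rewrite dot_sumr -c1 ler_sum // => i _; rewrite ler_piMr.
Qed.

Lemma dual_ball_attain z : exists2 f, dual_unit_ball N f & dot f z = N z.
Proof.
(* [f] solves [s] iff [f] is in the dual ball and [dot f z >= N z]. *)
pose s := (- z, - N z) :: [seq (v, 1) | v <- V].
have [[f fsol]|infeas] := pselect (feasible s).
  have fB : dual_unit_ball N f.
    apply/dual_ballP => i; rewrite dotC; apply: (fsol (V`_i, 1)).
    by rewrite inE map_f ?mem_nth ?orbT.
  exists f => //; apply/eqP; rewrite eq_le dual_ball_le //=.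
  by have := fsol _ (mem_head _ _); rewrite /= dotNl dotC lerN2.
(* No consequence of [s] has the contradictory form [(0, b)] with [b < 0]. *)
have cone_ge a b : cone s a b ->
    exists2 mu, 0 <= mu & N (a + mu *: z) <= b + mu * N z.
  elim=> {a b} [|a b a' b' _ [mu mu0 h] _ [mu' mu'0 h']|c a b c0 _ [mu mu0 h]|a b].
  - by exists 0; rewrite ?scale0r ?addr0 ?nrm0 ?mul0r ?addr0.
  - exists (mu + mu'); first exact: addr_ge0.
    rewrite scalerDl mulrDl addrACA [leRHS]addrACA.
    exact: le_trans (ler_nrmD _ _ _) (lerD h h').
  - exists (c * mu); first exact: mulr_ge0.
    by rewrite -scalerA -scalerDr nrmZ // ger0_norm // -mulrA -mulrDr ler_wpM2l.
  - rewrite inE => /orP[/eqP[-> ->]|/mapP[v vV [-> ->]]].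
      by exists 1; rewrite ?scale1r ?addNr ?nrm0 ?mul1r ?addNr.
    by exists 0; rewrite ?scale0r ?addr0 ?mul0r ?addr0 //; apply/hV/conv_hull_mem.
have [b b0 /cone_ge[mu mu0]] := farkas infeas.
by rewrite add0r nrmZ // ger0_norm //; lra.
Qed.

(* The faces of the dual ball are cut out by the vertices [V`_j] of the
   ball; [active f] records the facets through [f]. *)
Definition active (f : vec) := [set j : 'I_(size V) | dot f V`_j == 1].

Lemma active_attain f j : dual_unit_ball N f -> j \in active f ->
  dot f V`_j = N V`_j.
Proof.
move=> fB; rewrite inE => /eqP fj; apply/eqP; rewrite eq_le dual_ball_le //.
by rewrite fj; apply/hV/conv_hull_mem/mem_nth.
Qed.

Lemma dual_attain_midpoint y w t x :
  dual_unit_ball N y -> dual_unit_ball N w -> 0 < t < 1 ->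
  dot (t *: y + (1 - t) *: w) x = N x -> dot y x = N x /\ dot w x = N x.
Proof.
move=> yB wB /andP[t0 t1]; rewrite dotDl !dotZl.
have := dual_ball_le hN x yB; have := dual_ball_le hN x wB.
by set a := dot y x; set b := dot w x => bN aN e; nra.
Qed.

Lemma exists_dot_gt0 d : d != 0 -> exists j : 'I_(size V), 0 < dot d V`_j.
Proof.
move=> d0; apply: contrapT => dV; move: (dot_self_gt0 d0); apply/negP.
have /hV[c [c0 c1 ec]] : N ((N d)^-1 *: d) <= 1 by rewrite nrm_normalize.
have Nd : 0 < (N d)^-1 by rewrite invr_gt0 nrm_gt0.
rewrite -leNgt -(pmulr_rle0 _ Nd) -dotZr ec dot_sumr.
apply: sumr_le0 => j _; rewrite mulr_ge0_le0 // leNgt.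
by apply/negP => dj; apply: dV; exists j.
Qed.

Lemma dual_perturb f d : dual_unit_ball N f ->
    (forall j, j \in active f -> dot d V`_j = 0) ->
  exists2 e, 0 < e & dual_unit_ball N (f + e *: d) /\ dual_unit_ball N (f - e *: d).
Proof.
move=> /dual_ballP fB dact.
pose g j := if j \in active f then 1 else (1 - dot f V`_j) / (1 + `|dot d V`_j|).
have [|e e0 eg] := @exists_pos_lb R _ (enum 'I_(size V)) g => [j _|].
  rewrite /g; case: ifPn => // /negP jf; apply: divr_gt0; last by rewrite ltr_wpDr.
  by rewrite subr_gt0 lt_def fB andbT; apply/eqP => fj; apply: jf; rewrite inE -fj.
exists e => //; split; apply/dual_ballP => j; rewrite dotDl ?dotNl dotZl.
all: have := eg j (mem_enum _ j); rewrite /g.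
all: case: ifPn => [/dact -> _|_]; rewrite ?mulr0 ?oppr0 ?addr0 ?fB //.
all: rewrite ler_pdivlMr ?ltr_wpDr // => ge.
all: have /ler_normlP[] := lexx `|dot d V`_j|; nra.
Qed.

Lemma extreme_dual_rigid f d : extreme_point (dual_unit_ball N) f ->
  (forall j, j \in active f -> dot d V`_j = 0) -> d = 0.
Proof.
case=> fB fext /(dual_perturb fB)[e e0 [fB1 fB2]].
have /fext : f = 2^-1 *: (f + e *: d) + (1 - 2^-1) *: (f - e *: d).
  rewrite (_ : 1 - 2^-1 = 2^-1 :> R); last by field.
  rewrite -scalerDr addrACA subrr addr0 -mulr2n -scaler_nat scalerA.
  by rewrite mulVf ?pnatr_eq0 // scale1r.
move=> /(_ fB1 fB2); rewrite invr_gt0 invf_lt1 ?ltr0n ?ltr1n // => /(_ isT) /eqP.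
rewrite (can_eq (addKr f)) -subr_eq0 opprK -scalerDr scaler_eq0 (gt_eqF e0) /=.
by rewrite -mulr2n -scaler_nat scaler_eq0 pnatr_eq0 /= => /eqP.
Qed.

Lemma extreme_dual_active_inj f g : extreme_point (dual_unit_ball N) f ->
  extreme_point (dual_unit_ball N) g -> active f = active g -> f = g.
Proof.
move=> fE gE fg; apply/eqP; rewrite eq_sym -subr_eq0; apply/eqP.
apply: extreme_dual_rigid fE _ => j jf; have := jf; rewrite fg !inE => /eqP gj.
by move: jf; rewrite !inE => /eqP fj; rewrite dotBl gj fj subrr.
Qed.

Lemma extreme_dual_finite :
  exists Ef : seq vec, forall f, f \in Ef <-> extreme_point (dual_unit_ball N) f.
Proof.
suff [Ef EfP] : exists Ef : seq vec, forall f, f \in Ef <->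
    extreme_point (dual_unit_ball N) f /\ active f \in enum {set 'I_(size V)}.
  by exists Ef => f; rewrite EfP mem_enum; split=> [[]|].
elim: (enum _) => [|S L [Ef EfP]]; first by exists [::] => f; split=> [|[]].
have [[g [gE gS]]|noS] :=
  pselect (exists g, extreme_point (dual_unit_ball N) g /\ active g = S).
  exists (g :: Ef) => f; rewrite inE; split.
    case/orP=> [/eqP->|/EfP[fE fL]]; first by rewrite gS mem_head.
    by rewrite inE fL orbT.
  case=> fE; rewrite inE => /orP[/eqP fS|fL]; last by apply/orP; right; apply/EfP.
  by rewrite (extreme_dual_active_inj fE gE) ?eqxx ?gS.
exists Ef => f; split=> [/EfP[fE fL]|[fE]]; first by rewrite inE fL orbT.
rewrite inE => /orP[/eqP fS|fL]; last exact/EfP.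
by case: noS; exists f.
Qed.

(* Moving from [f] along a direction [d] vanishing on the active facets
   until the first new facet is hit. *)
Lemma dual_step f d : dual_unit_ball N f -> d != 0 ->
    (forall j, j \in active f -> dot d V`_j = 0) ->
  exists r, dual_unit_ball N (f + r *: d) /\ active f \proper active (f + r *: d).
Proof.
move=> /dual_ballP fB d0 dact; have [j0 dj0] := exists_dot_gt0 d0.
pose ratio (j : 'I_(size V)) := (1 - dot f V`_j) / dot d V`_j.
have [jm djm jmin] := @arg_minP _ _ _ j0 (fun j => 0 < dot d V`_j) ratio dj0.
have ratio0 : 0 <= ratio jm by apply: divr_ge0; [rewrite subr_ge0 | apply: ltW].
have gV (j : 'I_(size V)) :
    dot (f + ratio jm *: d) V`_j = dot f V`_j + ratio jm * dot d V`_j.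
  by rewrite dotDl dotZl.
exists (ratio jm); split.
  apply/dual_ballP => j; rewrite gV.
  have [dj|] := ltP 0 (dot d V`_j); last by have := fB j; nra.
  have := jmin j dj; rewrite /ratio ler_pdivlMr // => le_r.
  by have := divfK (lt0r_neq0 dj) (1 - dot f V`_j); nra.
apply/properP; split.
  apply/fintype.subsetP => j jf; rewrite inE gV dact // mulr0 addr0.
  by move: jf; rewrite inE.
exists jm; first by rewrite inE gV /ratio divfK ?lt0r_neq0 // addrC subrK.
by apply: contraPN djm => /dact ->; rewrite ltxx.
Qed.

(* An attaining [f] with the most active facets is extreme: otherwise
   [dual_step] along a chord through [f] would activate one more facet. *)
Lemma extreme_dual_attain z :
  exists2 f, extreme_point (dual_unit_ball N) f & dot f z = N z.
Proof.
pose ok k := `[< exists f, [/\ dual_unit_ball N f, dot f z = N z & #|active f| = k] >].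
have [||k /asboolP[f [fB fz <-]] kmax] := @ex_maxnP ok (size V).
- by have [f fB fz] := dual_ball_attain z; exists #|active f|; apply/asboolP; exists f.
- by move=> k /asboolP[f [_ _ <-]]; rewrite -[X in (_ <= X)%N]card_ord max_card.
exists f => //; split=> // y w t yB wB t01 fyw; have [//|yw] := eqVneq y w.
have [yz wz] : dot y z = N z /\ dot w z = N z.
  by apply: dual_attain_midpoint yB wB t01 _; rewrite -fyw.
have dact j : j \in active f -> dot (w - y) V`_j = 0.
  move=> jf; have := active_attain fB jf; rewrite fyw.
  by case/(dual_attain_midpoint yB wB t01) => yj wj; rewrite dotBl yj wj subrr.
have wy : w - y != 0 by rewrite subr_eq0 eq_sym.
have [r [gB /proper_card]] := dual_step fB wy dact.
rewrite ltnNge => /negP[]; apply: kmax; apply/asboolP; exists (f + r *: (w - y)).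
by split; rewrite // dotDl dotZl dotBl wz yz subrr mulr0 addr0.
Qed.

End Dual.
End Ball.

Section OperatorNorm.
Variables (R : realType) (n : nat) (N : 'rV[R]_n -> R).
Hypothesis hN : is_norm N.
Local Notation vec := 'rV[R]_n.
Local Notation dot := (@dot R n).
Variables V Ef : seq vec.
Hypothesis hV : ball_hull N V.
Hypothesis hEf : forall f, f \in Ef <-> extreme_point (dual_unit_ball N) f.

Lemma nrm_mulmx_le (Q : 'M[R]_n) M x :
  (forall v f, v \in V -> f \in Ef -> dot f (v *m Q) <= M) ->
  N x <= 1 -> N (x *m Q) <= M.
Proof.
move=> le_M /hV[c [c0 c1 ->]]; rewrite mulmx_suml.
under eq_bigr do rewrite -scalemxAl.
apply: le_trans (ler_nrm_conv hN (fun j => V`_j *m Q) c0) _.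
rewrite -[M]mul1r -c1 mulr_suml ler_sum // => j _; rewrite ler_wpM2l //.
have [f /hEf fE <-] := extreme_dual_attain hN hV (V`_j *m Q).
by rewrite le_M ?mem_nth.
Qed.

Lemma opnorm_ub (Q : 'M[R]_n) x : N x <= 1 -> N (x *m Q) <= opnorm N Q.
Proof.
pose M := \big[Num.max/0]_(v <- V) \big[Num.max/0]_(f <- Ef) dot f (v *m Q).
have le_M v f : v \in V -> f \in Ef -> dot f (v *m Q) <= M.
  by move=> vV fE; apply: (bigmax_sup_seq _ v) => //; apply: (le_bigmax_seq _ f).
move=> x1; apply: ub_le_sup; last by exists x.
by exists M => _ [y y1 <-]; apply: nrm_mulmx_le y1.
Qed.

Lemma opnorm_le (Q : 'M[R]_n) M :
  (forall v f, v \in V -> f \in Ef -> dot f (v *m Q) <= M) -> opnorm N Q <= M.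
Proof.
move=> le_M; apply: ge_sup => [|_ [x x1 <-]]; last exact: nrm_mulmx_le.
by exists (N (0 *m Q)), 0; rewrite // /unit_ball /= nrm0 // ler01.
Qed.

Lemma opnorm_lt (Q : 'M[R]_n) M :
  (forall v f, v \in V -> f \in Ef -> dot f (v *m Q) < M) -> opnorm N Q < M.
Proof.
move=> lt_M; have M1 : M - 1 < M by rewrite ltrBlDr ltrDl ltr01.
pose M' := \big[Num.max/(M - 1)]_(v <- V | v \in V)
             \big[Num.max/(M - 1)]_(f <- Ef | f \in Ef) dot f (v *m Q).
apply: (@le_lt_trans _ _ M').
  apply: opnorm_le => v f vV fE.
  by apply: (bigmax_sup_seq _ v) => //; apply: (le_bigmax_seq _ f).
by apply: bigmax_lt => // v vV; apply: bigmax_lt => // f fE; apply: lt_M.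
Qed.

Lemma rel_proj_const_le Y P : is_projection Y P -> rel_proj_const N Y <= opnorm N P.
Proof.
move=> YP; apply: ge_inf; last by exists P.
exists 0 => _ [Q _ <-]; have := @opnorm_ub Q 0.
by rewrite mul0mx nrm0 // ler01; apply.
Qed.

Definition attaining (P : 'M[R]_n) : seq (vec * vec) :=
  undup [seq p <- [seq (v, f) | v <- V, f <- Ef] | dot p.2 (p.1 *m P) == opnorm N P].

Variable P : 'M[R]_n.

Lemma attainingP v f : (v, f) \in attaining P ->
  [/\ v \in V, f \in Ef & dot f (v *m P) = opnorm N P].
Proof.
rewrite mem_undup mem_filter => /andP[/eqP vf /allpairsP[[v' f'] /= [vV fE [ev ef]]]].
by subst.
Qed.

Lemma not_attaining_lt v f : v \in V -> f \in Ef -> (v, f) \notin attaining P ->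
  dot f (v *m P) < opnorm N P.
Proof.
move=> vV fE; rewrite mem_undup mem_filter allpairs_f // andbT => na.
rewrite lt_def eq_sym na /=.
case/hEf: fE => fB _; apply: le_trans (dual_ball_le hN _ fB) (opnorm_ub _ _).
exact/hV/conv_hull_mem.
Qed.

Lemma dot_mulmx_dir v f D t :
  dot f (v *m (P + t *: D)) = dot f (v *m P) + t * dot f (v *m D).
Proof. by rewrite mulmxDr -scalemxAr dotDr dotZr. Qed.

Lemma local_gap D : exists2 t, 0 < t & forall v f, v \in V -> f \in Ef ->
  (v, f) \notin attaining P -> dot f (v *m (P + t *: D)) < opnorm N P.
Proof.
pose g (p : vec * vec) := if p \in attaining P then 1 else
  (opnorm N P - dot p.2 (p.1 *m P)) / (1 + `|dot p.2 (p.1 *m D)|).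
have [|t t0 tg] := @exists_pos_lb R _ [seq (v, f) | v <- V, f <- Ef] g.
  move=> _ /allpairsP[[v f] /= [vV fE ->]]; rewrite /g; case: ifPn => // na.
  by apply: divr_gt0; rewrite ?subr_gt0 ?not_attaining_lt ?ltr_wpDr.
exists t => // v f vV fE na; have := tg (v, f) (allpairs_f _ vV fE).
rewrite /g (negbTE na) /= ler_pdivlMr ?ltr_wpDr // dot_mulmx_dir => le_t.
by have /ler_normlP[] := lexx `|dot f (v *m D)|; nra.
Qed.

Lemma opnorm_dir_flat D :
  (forall p, p \in attaining P -> dot p.2 (p.1 *m D) = 0) ->
  exists2 t, 0 < t & opnorm N (P + t *: D) <= opnorm N P.
Proof.
move=> flat; have [t t0 gap] := local_gap D; exists t => //.
apply: opnorm_le => v f vV fE; have [a|na] := boolP ((v, f) \in attaining P).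
  by rewrite dot_mulmx_dir (flat _ a) mulr0 addr0; case/attainingP: a => _ _ ->.
exact/ltW/gap.
Qed.

Lemma opnorm_dir_descent D :
  (forall p, p \in attaining P -> dot p.2 (p.1 *m D) < 0) ->
  exists2 t, 0 < t & opnorm N (P + t *: D) < opnorm N P.
Proof.
move=> desc; have [t t0 gap] := local_gap D; exists t => //.
apply: opnorm_lt => v f vV fE; have [a|na] := boolP ((v, f) \in attaining P).
  by have := desc _ a; case/attainingP: a => _ _; rewrite dot_mulmx_dir => -> /=; nra.
exact: gap.
Qed.

End OperatorNorm.

Lemma projection_directions (F : fieldType) n (Y : 'M[F]_n) :
  exists2 W : {vspace 'M[F]_n}, \dim W = (\rank Y * (n - \rank Y))%N &
    forall D, D \in W -> (D <= Y)%MS /\ forall x : 'rV_n, (x <= Y)%MS -> x *m D = 0.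
Proof.
(* [W] is the image of the injective map [M |-> A *m M *m B], where [x *m A]
   are the coordinates of the [Y^C]-component of [x] and [B] is a basis of [Y]. *)
have capY : ((Y^C)%MS :&: Y = 0)%MS by rewrite capmxC capmx_compl.
pose C := row_base (Y^C)%MS; pose A := proj_mx (Y^C)%MS Y *m pinvmx C.
have CA : C *m A = 1%:M.
  apply: (row_free_inj (row_base_free (Y^C)%MS)).
  by rewrite -/C mul1mx /A mulmxA proj_mx_id ?mulmxKpV ?eq_row_base.
have YA x : (x <= Y)%MS -> x *m A = 0 by move=> xY; rewrite mulmxA proj_mx_0 ?mul0mx.
pose B := row_base Y; have B_free : row_free B := row_base_free Y.
have BY : (B <= Y)%MS by rewrite eq_row_base.
clearbody A B; pose Phi := linfun (mulmxr B \o mulmx A).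
exists (limg Phi).
  have /eqP Phi_inj : lker Phi == 0%VS.
    apply/lker0P => M1 M2; rewrite !lfunE /= => /(congr1 (mulmx C)).
    by rewrite !mulmxA CA !mul1mx => /(row_free_inj B_free).
  by rewrite limg_dim_eq ?Phi_inj ?capv0 // dimvf dim_matrix mxrank_compl mulnC.
move=> _ /memv_imgP[M _ ->]; rewrite lfunE /=; split.
  exact: submx_trans (submxMl _ _) BY.
by move=> x xY; rewrite !mulmxA YA ?mul0mx.
Qed.

Lemma free_scale (K : fieldType) (vT : vectType K) d (X : d.-tuple vT) (c : 'I_d -> K) :
  free X -> (forall i, c i != 0) -> free [seq c i *: X`_i | i : 'I_d].
Proof.
move=> /freeP fX c0.
have -> : [seq c i *: X`_i | i : 'I_d] = [tuple c i *: X`_i | i < d].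
  by rewrite /= /image_mem enumT.
apply/freeP => k k0 i; have /eqP : k i * c i = 0.
  apply: (fX (fun j => k j * c j)); rewrite -[RHS]k0.
  by apply: eq_bigr => j _; rewrite nth_mktuple scalerA.
by rewrite mulf_eq0 (negbTE (c0 i)) orbF => /eqP.
Qed.

Lemma affdim_ge_dirs (R : realType) n (S : set 'M[R]_n) P0 (K : {vspace 'M[R]_n}) :
  S P0 -> (forall D, D \in K -> exists2 t, 0 < t & S (P0 + t *: D)) ->
  (\dim K <= affdim S)%N.
Proof.
(* Witness: [P0] with the points [P0 + t i *: X`_i] for a basis [X] of [K]. *)
move=> SP0 KS; pose X := vbasis K.
have /choice[t tS] : forall i : 'I_(\dim K), exists t, 0 < t /\ S (P0 + t *: X`_i).
  move=> i; have [|t t0 St] := KS X`_i; last by exists t.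
  by apply: vbasis_mem; rewrite mem_nth ?size_tuple.
have dimK : (\dim K < (n * n).+1)%N.
  by rewrite ltnS (leq_trans (dimvS (subvf K))) // dimvf dim_matrix.
apply: (@leq_bigmax_cond _ _ _ (Ordinal dimK)); apply/asboolP.
pose Pt i := if unlift ord0 i is Some j then P0 + t j *: X`_j else P0.
exists Pt; split=> [i|]; first by rewrite /Pt; case: unliftP => [j _|_]; [case: (tS j)|].
have -> : [seq Pt (lift ord0 i) - Pt ord0 | i : 'I_(\dim K)] =
          [seq t i *: X`_i | i : 'I_(\dim K)].
  by apply: eq_map => i; rewrite /Pt liftK unlift_none addrC addKr.
by apply: free_scale (basis_free (vbasisP K)) _ => i; rewrite lt0r_neq0 ?(tS i).1.
Qed.

Definition pair_values (R : realType) n (s : seq ('rV[R]_n * 'rV[R]_n)) (D : 'M[R]_n) :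
  'rV[R]_(size s) := \row_i dot (nth (0, 0) s i).2 ((nth (0, 0) s i).1 *m D).

Fact pair_values_is_linear (R : realType) n (s : seq ('rV[R]_n * 'rV[R]_n)) :
  semilinear (pair_values s).
Proof.
split=> [a D|D1 D2]; apply/rowP => i; rewrite !mxE /=.
  by rewrite -scalemxAr dotZr.
by rewrite mulmxDr dotDr.
Qed.

HB.instance Definition _ (R : realType) n (s : seq ('rV[R]_n * 'rV[R]_n)) :=
  GRing.isSemilinear.Build R 'M[R]_n 'rV[R]_(size s) _ (pair_values s)
    (pair_values_is_linear s).

Section MinimalProjections.
Variables (R : realType) (n : nat) (N : 'rV[R]_n -> R).
Hypothesis hN : is_norm N.
Variables V Ef : seq 'rV[R]_n.
Hypothesis hV : ball_hull N V.
Hypothesis hEf : forall f, f \in Ef <-> extreme_point (dual_unit_ball N) f.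
Variables (Y P0 : 'M[R]_n) (W : {vspace 'M[R]_n}).
Hypothesis P0min : Pmin N Y P0.
Hypothesis Wdir :
  forall D, D \in W -> (D <= Y)%MS /\ forall x : 'rV_n, (x <= Y)%MS -> x *m D = 0.

Local Notation s := (attaining N V Ef P0).

Lemma is_projection_dir D t : D \in W -> is_projection Y (P0 + t *: D).
Proof.
case/Wdir=> DY D0; case: P0min => -[P0Y P0id] _; split.
  by rewrite addmx_sub ?scalemx_sub.
by move=> x xY; rewrite mulmxDr -scalemxAr D0 // scaler0 addr0 P0id.
Qed.

Lemma no_descent_dir D : D \in W -> ~ (forall p, p \in s -> dot p.2 (p.1 *m D) < 0).
Proof.
move=> DW /(opnorm_dir_descent hN hV hEf)[t _]; case: P0min => _ ->.
by rewrite ltNge (rel_proj_const_le hN hV hEf (is_projection_dir t DW)).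
Qed.

Lemma Pmin_flat_dir D : D \in W -> (forall p, p \in s -> dot p.2 (p.1 *m D) = 0) ->
  exists2 t, 0 < t & Pmin N Y (P0 + t *: D).
Proof.
move=> DW /(opnorm_dir_flat hN hV hEf)[t t0 le_t]; exists t => //.
have proj := is_projection_dir t DW; split=> //; apply/eqP; rewrite eq_le.
by move: le_t; case: P0min => _ -> ->; rewrite (rel_proj_const_le hN hV hEf).
Qed.

Lemma pair_valuesE D p : p \in s -> exists i, dot p.2 (p.1 *m D) = pair_values s D 0 i.
Proof.
by move=> ps; exists (Ordinal (etrans (index_mem p s) ps)); rewrite mxE nth_index.
Qed.

(* Otherwise some direction of [W] would decrease all the attaining pairs. *)
Lemma dim_pair_values_lt : (\dim (linfun (pair_values s) @: W) < size s)%N.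
Proof.
have dim_full : \dim {:'rV[R]_(size s)} = size s by rewrite dimvf dim_matrix mul1r.
rewrite ltn_neqAle -[X in (_ <= X)%N]dim_full dimvS ?subvf // andbT.
apply/negP => /eqP full.
have /memv_imgP[D DW DN1] : const_mx (-1) \in (linfun (pair_values s) @: W)%VS.
  suff -> : (linfun (pair_values s) @: W)%VS = fullv by rewrite memvf.
  by apply/eqP; rewrite eqEdim subvf dim_full full /=.
apply: (no_descent_dir DW) => p /(pair_valuesE D)[i ->].
by rewrite -lfunE -DN1 mxE ltrN10.
Qed.

Lemma Pmin_kernel : exists2 K : {vspace 'M[R]_n}, (\dim W < \dim K + size s)%N &
  forall D, D \in K -> exists2 t, 0 < t & Pmin N Y (P0 + t *: D).
Proof.
exists (W :&: lker (linfun (pair_values s)))%VS.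
  by rewrite -(limg_ker_dim (linfun (pair_values s)) W) ltn_add2l dim_pair_values_lt.
move=> D; rewrite memv_cap memv_ker => /andP[DW /eqP D0].
apply: Pmin_flat_dir => // p /(pair_valuesE D)[i ->].
by rewrite -lfunE D0 mxE.
Qed.

End MinimalProjections.

Theorem mainTheorem9 (R : realType) (n : nat) (N : 'rV[R]_n -> R)
    (Y : 'M[R]_n) (k m : nat) (P0 : 'M[R]_n) :
  is_norm N -> polyhedral N ->
  \rank Y = k -> (1 <= k)%N -> (k <= n - 1)%N ->
  Pmin N Y P0 ->
  (forall s : seq ('rV[R]_n * 'rV[R]_n),
      uniq s -> (forall xf, xf \in s -> norming_pair N P0 xf) ->
      (size s <= m)%N) ->
  ((k * (n - k))%:Z - m%:Z + 1 <= (affdim (Pmin N Y))%:Z)%R.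
Proof.
move=> hN hpoly rY _ _ P0min norming_le_m.
have [V hV Vext] := ball_hull_extreme hpoly.
have [Ef hEf] := extreme_dual_finite hV.
have [W dimW Wdir] := projection_directions Y.
have [K dimK KP] := Pmin_kernel hN hV hEf P0min Wdir.
have s_le_m : (size (attaining N V Ef P0) <= m)%N.
  apply: norming_le_m => [|[v f] /attainingP[vV /hEf fE vf]]; first exact: undup_uniq.
  by split=> //; apply: Vext.
have := affdim_ge_dirs P0min KP.
move: dimK; rewrite dimW rY; lia.
Qed.
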